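(* Let $k\ge 3$. For every $m\in\mathbb{Z}_{>0}$, $E^{2m}\in M(1)^++C_2(V_L^+)$.
   Context: $L=\mathbb{Z}\alpha$, $\langle\alpha,\alpha\rangle=2k$; $V_L=M(1)\otimes\mathbb{C}[L]$ the lattice VOA, $\theta$ the involution $\alpha(-n_1)\cdots\alpha(-n_r)\otimes e^{\beta}\mapsto(-1)^r\alpha(-n_1)\cdots\alpha(-n_r)\otimes e^{-\beta}$, $V_L^+$ its fixed points, $M(1)^{\pm}$ the $\pm1$-eigenspaces of $\theta$ on $M(1)$ (spanned by monomials $\alpha(-n_1)\cdots\alpha(-n_r)\mathbf 1$ with $r$ even, resp. odd). We write $E^m=e^{m\alpha}+e^{-m\alpha}$, $F^m=e^{m\alpha}-e^{-m\alpha}$ (identifying $e^{\beta}$ with $\mathbf 1\otimes e^\beta$). $C_2(V)$ is the span of $\{v_{-2}u:u,v\in V\}$. *)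

(* Concrete model of the rank-one lattice VOA
   V_L = M(1) (x) C[L],  L = Z alpha, <alpha,alpha> = 2k, over a field F
   (of characteristic 0 in the theorem), with trivial 2-cocycle
   (legitimate since L is even and of rank one). *)
From HB Require Import structures.
From mathcomp Require Import all_boot all_order all_algebra.
Set Implicit Arguments. Unset Strict Implicit. Unset Printing Implicit Defensive.
Import Order.TTheory GRing.Theory Num.Theory.
Local Open Scope ring_scope.

(* A basis monomial  alpha(-n_1)...alpha(-n_r) 1 (x) e^{p alpha}  is
   represented by the pair ([:: n_1; ...; n_r], p); the n_i are positive and
   their order is irrelevant (the alpha(-n) commute), see [coef]. *)
Definition mon := (seq nat * int)%type.

Section LatticeVOA.
Variable F : fieldType.
Variable k : nat.

(* A vector of V_L is a formal finite linear combination of monomials;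
   two vectors are equal iff all their coefficients [coef] agree. *)
Definition vec := seq (F * mon).

Definition coef (v : vec) (b : mon) : F :=
  \sum_(e <- v | perm_eq e.2.1 b.1 && (e.2.2 == b.2)) e.1.

Definition wfv (v : vec) : bool := all (fun e => all (fun n => 0 < n)%N e.2.1) v.

Definition scalev (c : F) (v : vec) : vec := [seq (c * e.1, e.2) | e <- v].
Definition linext (f : mon -> vec) (v : vec) : vec :=
  flatten [seq scalev e.1 (f e.2) | e <- v].

(* Heisenberg modes alpha(j), [alpha(i),alpha(j)] = 2k i delta_{i+j,0},
   alpha(0) = <alpha, . > on the lattice part. *)
Definition alpha_mon (j : int) (x : mon) : vec :=
  match j with
  | Posz 0 => [:: ((2 * k)%:R * x.2%:~R, x)]
  | Posz n.+1 =>
      [seq ((2 * k * n.+1)%:R, (take i x.1 ++ drop i.+1 x.1, x.2))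
      | i <- iota 0 (size x.1) & nth 0%N x.1 i == n.+1]
  | Negz n => [:: (1, (n.+1 :: x.1, x.2))]
  end.
Definition alpha (j : int) : vec -> vec := linext (alpha_mon j).

(* S_a = coefficient of z^a in E^-(-p alpha, z) = exp(sum_{n>0} p alpha(-n) z^n / n):
   a S_a = sum_{j=1}^a p alpha(-j) S_{a-j}. *)
Fixpoint Sop_aux (fuel a : nat) (p : int) (v : vec) : vec :=
  match a with
  | 0%N => v
  | _ => match fuel with
         | 0%N => [::]
         | fuel'.+1 =>
             scalev (p%:~R / a%:R)
               (flatten [seq alpha (- (j%:Z)) (Sop_aux fuel' (a - j) p v) | j <- iota 1 a])
         end
  end.
Definition Sop (a : nat) (p : int) (v : vec) : vec := Sop_aux a a p v.

(* T_b = coefficient of z^{-b} in E^+(-p alpha, z) = exp(-sum_{n>0} p alpha(n) z^{-n} / n):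
   b T_b = - sum_{j=1}^b p alpha(j) T_{b-j}. *)
Fixpoint Top_aux (fuel b : nat) (p : int) (v : vec) : vec :=
  match b with
  | 0%N => v
  | _ => match fuel with
         | 0%N => [::]
         | fuel'.+1 =>
             scalev (- (p%:~R / b%:R))
               (flatten [seq alpha (j%:Z) (Top_aux fuel' (b - j) p v) | j <- iota 1 b])
         end
  end.
Definition Top (b : nat) (p : int) (v : vec) : vec := Top_aux b b p v.

Definition shiftlat (p : int) (v : vec) : vec := [seq (e.1, (e.2.1, e.2.2 + p)) | e <- v].

Definition wt (x : mon) : nat := (sumn x.1 + k * (absz x.2) ^ 2)%N.

(* n-th mode of Y(e^{p alpha}, z) = E^-(-p alpha,z) E^+(-p alpha,z) e_{p alpha} z^{p alpha}
   on the basis monomial w *)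
Definition exp_mode_mon (p n : int) (w : mon) : vec :=
  flatten [seq
    let a := (b%:Z - (2 * k)%:Z * p * w.2 - n - 1)%R in
    if (0 <= a)%R then Sop (absz a) p (shiftlat p (Top b p [:: (1, w)])) else [::]
  | b <- iota 0 (sumn w.1).+1].

(* n-th mode of the vertex operator of the monomial (l, p), by the iterate
   formula  (alpha(-s) v)_m = sum_{i>=0} C(s+i-1,i) ( alpha(-s-i) v_{m+i}
                                           - (-1)^s v_{m-s-i} alpha(i) ),
   both sums being finite (truncated at a bound that exceeds all nonzero terms). *)
Fixpoint mode_aux (l : seq nat) (p m : int) (w : mon) : vec :=
  match l with
  | [::] => exp_mode_mon p m w
  | s :: l' =>
      flatten [seq
        scalev ('C(s + i - 1, i))%:R (alpha (- ((s + i)%N%:Z)) (mode_aux l' p (m + i%:Z) w))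
        ++ scalev (- ((-1) ^+ s * ('C(s + i - 1, i))%:R))
             (linext (mode_aux l' p (m - s%:Z - i%:Z)) (alpha_mon i%:Z w))
      | i <- iota 0 (wt (l', p) + wt w + absz m).+1]
  end.

Definition mode (v : vec) (m : int) (u : vec) : vec :=
  flatten [seq scalev e.1 (linext (mode_aux e.2.1 e.2.2 m) u) | e <- v].

Definition theta (v : vec) : vec :=
  [seq ((-1) ^+ size e.2.1 * e.1, (e.2.1, - e.2.2)) | e <- v].

Definition inVplus (v : vec) : Prop :=
  wfv v /\ forall b, coef (theta v) b = coef v b.

Definition inM1plus (v : vec) : bool :=
  all (fun e => [&& e.2.2 == 0, ~~ odd (size e.2.1) & all (fun n => 0 < n)%N e.2.1]) v.

Definition inC2plus (v : vec) : Prop :=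
  exists l : seq (F * vec * vec),
    (forall t, t \in l -> inVplus t.1.2 /\ inVplus t.2) /\
    forall b, coef v b = \sum_(t <- l) t.1.1 * coef (mode t.1.2 (-2) t.2) b.

Definition Evec (m : int) : vec := [:: (1, ([::], m)); (1, ([::], - m))].

End LatticeVOA.

(* Put N := 2km^2 - 1 and U := alpha(-N) e^{m alpha} - alpha(-N) e^{-m alpha}, which lies in
   V_L^+.  In the mode e^{p alpha}_{-2} acting on alpha(-N) e^{q alpha} with 2kpq = N + 1,
   the exponent of z in E^+(-p alpha, z) only leaves room for the single term
   alpha(N) alpha(-N), so  e^{+-m alpha}_{-2} alpha(-N) e^{+-m alpha} = -+2km e^{+-2m alpha}.
   The cross terms of E^m_{-2} U are -Z and -theta Z, with Z := e^{m alpha}_{-2} alpha(-N)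
   e^{-m alpha} in M(1); so E^m_{-2} U = -2km E^{2m} - (Z + theta Z) with Z + theta Z in
   M(1)^+, and E^{2m} lies in M(1)^+ + C_2(V_L^+). *)
From mathcomp Require Import all_boot all_order all_algebra.
From mathcomp Require Import ring zify.
Import GRing.Theory Num.Theory.
Local Open Scope ring_scope.

Lemma flatten_map_nil (A : eqType) (T : Type) (g : A -> seq T) (s : seq A) :
  {in s, forall x, g x = [::]} -> flatten (map g s) = [::].
Proof. by move/eq_in_map => ->; elim: s. Qed.

Section LatticeVOAComputations.
Variables (F : fieldType) (k : nat).
Implicit Types (Q : pred mon) (u v : vec F) (c d : F).

Lemma scalevA c d v : scalev c (scalev d v) = scalev (c * d) v.
Proof. by rewrite /scalev -map_comp; apply: eq_map => e /=; rewrite mulrA. Qed.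

Lemma scalev_flatten_map (A : Type) c (g : A -> vec F) (s : seq A) :
  flatten [seq scalev c (g x) | x <- s] = scalev c (flatten [seq g x | x <- s]).
Proof. by elim: s => //= x s ->; rewrite /scalev map_cat. Qed.

Lemma theta_scalev c v : theta (scalev c v) = scalev c (theta v).
Proof. by rewrite /scalev /theta -!map_comp; apply: eq_map => e /=; rewrite mulrCA. Qed.

Lemma linext_scalev (f : mon -> vec F) c v : linext f (scalev c v) = scalev c (linext f v).
Proof.
rewrite /linext -scalev_flatten_map /scalev -map_comp; congr flatten.
by apply: eq_map => e /=; rewrite -/(scalev _ _) -/(scalev _ _) scalevA.
Qed.

Lemma shiftlat_scalev p c v : shiftlat p (scalev c v) = scalev c (shiftlat p v).
Proof. by rewrite /shiftlat /scalev -!map_comp. Qed.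

Lemma shiftlat_theta p v : shiftlat p (theta v) = theta (shiftlat (- p) v).
Proof. by rewrite /shiftlat /theta -!map_comp; apply: eq_map => e /=; rewrite opprD opprK. Qed.

Lemma coef_nil b : coef ([::] : vec F) b = 0.
Proof. by rewrite /coef big_nil. Qed.

Lemma coef_cons (e : F * mon) v b :
  coef (e :: v) b = (if perm_eq e.2.1 b.1 && (e.2.2 == b.2) then e.1 else 0) + coef v b.
Proof. by rewrite /coef big_cons; case: ifP; rewrite ?add0r. Qed.

Lemma coef_cat u v b : coef (u ++ v) b = coef u b + coef v b.
Proof. by rewrite /coef big_cat. Qed.

Lemma coef_scalev c v b : coef (scalev c v) b = c * coef v b.
Proof. by rewrite /coef big_map big_distrr. Qed.

Lemma coef_theta v l p : coef (theta v) (l, p) = (-1) ^+ size l * coef v (l, - p).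
Proof.
rewrite /coef big_map big_distrr /=; apply: eq_big => e /=; first by rewrite eqr_oppLR.
by case/andP=> /perm_size ->.
Qed.

Lemma Top_auxS fuel b p v :
  Top_aux k fuel.+1 b.+1 p v = scalev (- (p%:~R / b.+1%:R))
    (flatten [seq alpha k j%:Z (Top_aux k fuel (b.+1 - j) p v) | j <- iota 1 b.+1]).
Proof. by []. Qed.

Lemma Top_aux0 fuel p v : Top_aux k fuel 0 p v = v.
Proof. by case: fuel. Qed.

Lemma Sop_auxS fuel a p v :
  Sop_aux k fuel.+1 a.+1 p v = scalev (p%:~R / a.+1%:R)
    (flatten [seq alpha k (- j%:Z) (Sop_aux k fuel (a.+1 - j) p v) | j <- iota 1 a.+1]).
Proof. by []. Qed.

Lemma theta_alpha_mon j (x : mon) :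
  theta (alpha_mon F k j x) = scalev (- (-1) ^+ size x.1) (alpha_mon F k j (x.1, - x.2)).
Proof.
case: x => l p; case: j => [[|n]|n] /=.
- by rewrite /theta /scalev /= mulrNz; congr [:: (_, _)]; ring.
- rewrite /theta /scalev -!map_comp; apply/eq_in_map => i.
  rewrite mem_filter mem_iota => /andP[_ /andP[_ Hi]] /=.
  rewrite size_cat size_take size_drop Hi.
  have -> : (i + (size l - i.+1) = (size l).-1)%N by lia.
  by case: (size l) Hi => [|s] _ //=; rewrite exprS; congr (_, _); ring.
- by rewrite /theta /scalev /= exprS; congr [:: (_, _)]; ring.
Qed.

Lemma theta_alpha j v : alpha k j (theta v) = scalev (-1) (theta (alpha k j v)).
Proof.
elim: v => // [[c [l p]] v IH].
rewrite /alpha /linext /= -/(linext _ _) -/(alpha k j _) IH.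
rewrite /theta map_cat -/(theta _) -/(theta _) theta_scalev theta_alpha_mon.
by rewrite /scalev map_cat -!/(scalev _ _) !scalevA /=; congr (scalev _ _ ++ _); ring.
Qed.

Lemma Top_aux_theta fuel b p v :
  Top_aux k fuel b p (theta v) = theta (Top_aux k fuel b (- p) v).
Proof.
elim: fuel b => [|f IH] [|b] //.
rewrite !Top_auxS theta_scalev /theta map_flatten -/(theta _) -map_comp.
under eq_map => j do rewrite IH theta_alpha.
by rewrite scalev_flatten_map scalevA mulrNz; congr scalev; ring.
Qed.

Lemma Sop_aux_theta fuel a p v :
  Sop_aux k fuel a p (theta v) = theta (Sop_aux k fuel a (- p) v).
Proof.
elim: fuel a => [|f IH] [|a] //.
rewrite !Sop_auxS theta_scalev /theta map_flatten -/(theta _) -map_comp.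
under eq_map => j do rewrite IH theta_alpha.
by rewrite scalev_flatten_map scalevA mulrNz; congr scalev; ring.
Qed.

Lemma Top_aux_scalev fuel b p c v :
  Top_aux k fuel b p (scalev c v) = scalev c (Top_aux k fuel b p v).
Proof.
elim: fuel b => [|f IH] [|b] //.
rewrite !Top_auxS.
under eq_map => j do rewrite IH /alpha linext_scalev.
by rewrite scalev_flatten_map !scalevA mulrC.
Qed.

Lemma Sop_aux_scalev fuel a p c v :
  Sop_aux k fuel a p (scalev c v) = scalev c (Sop_aux k fuel a p v).
Proof.
elim: fuel a => [|f IH] [|a] //.
rewrite !Sop_auxS.
under eq_map => j do rewrite IH /alpha linext_scalev.
by rewrite scalev_flatten_map !scalevA mulrC.
Qed.

Lemma exp_mode_mon_theta p n l q :
  exp_mode_mon F k (- p) n (l, - q) =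
  scalev ((-1) ^+ size l) (theta (exp_mode_mon F k p n (l, q))).
Proof.
rewrite /exp_mode_mon /theta map_flatten -/(theta _) -map_comp -scalev_flatten_map.
congr flatten; apply: eq_map => b /=.
rewrite (_ : (2 * k)%:Z * - p * - q = (2 * k)%:Z * p * q); last by ring.
case: ifP => // _.
have -> : [:: (1, (l, - q))] = scalev ((-1) ^+ size l) (theta [:: (1 : F, (l, q))]).
  by rewrite /scalev /theta /= signrMK.
rewrite /Sop /Top Top_aux_scalev Top_aux_theta opprK shiftlat_scalev shiftlat_theta.
by rewrite opprK Sop_aux_scalev Sop_aux_theta opprK.
Qed.

Definition all_mon Q v : bool := all (fun e => Q e.2) v.

Definition lat_eq (q : int) : pred mon := fun x => x.2 == q.
Definition pos_modes : pred mon := fun x => all (fun n => 0 < n)%N x.1.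

Lemma all_mon_scalev Q c v : all_mon Q (scalev c v) = all_mon Q v.
Proof. by rewrite /all_mon /scalev all_map. Qed.

Lemma all_mon_flatten_map Q (A : eqType) (g : A -> vec F) (s : seq A) :
  (forall x, x \in s -> all_mon Q (g x)) -> all_mon Q (flatten (map g s)).
Proof.
elim: s => //= x s IH Hg; rewrite /all_mon all_cat -/(all_mon _ _) Hg ?mem_head //=.
by apply: IH => y Hy; apply: Hg; rewrite inE Hy orbT.
Qed.

Lemma all_mon_linext Q Q' (f : mon -> vec F) v :
  (forall x, Q x -> all_mon Q' (f x)) -> all_mon Q v -> all_mon Q' (linext f v).
Proof.
move=> Hf Hv; apply: all_mon_flatten_map => e He.
by rewrite all_mon_scalev Hf //; apply: (allP Hv).
Qed.

Definition alpha_stable Q : Prop := forall j x, Q x -> all_mon Q (alpha_mon F k j x).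

Lemma alpha_stable_lat q : alpha_stable (lat_eq q).
Proof.
move=> j [l p] /= Hp; case: j => [[|n]|n] /=; rewrite /all_mon /= ?andbT //.
by rewrite all_map; apply/allP.
Qed.

Lemma all_take_drop (T : Type) (P : pred T) (s : seq T) i :
  all P s -> all P (take i s ++ drop i.+1 s).
Proof.
move=> H; rewrite all_cat; apply/andP; split.
- by move: H; rewrite -{1}(cat_take_drop i s) all_cat => /andP[].
- by move: H; rewrite -{1}(cat_take_drop i.+1 s) all_cat => /andP[].
Qed.

Lemma alpha_stable_pos : alpha_stable pos_modes.
Proof.
move=> j [l p] /= Hl; case: j => [[|n]|n] /=; rewrite /all_mon /pos_modes /= ?andbT //.
by rewrite all_map; apply/allP => i _ /=; apply: all_take_drop.
Qed.

Lemma Top_aux_all_mon Q fuel b p v :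
  alpha_stable Q -> all_mon Q v -> all_mon Q (Top_aux k fuel b p v).
Proof.
move=> HQ Hv; elim: fuel b => [|f IH] [|b] //.
rewrite Top_auxS all_mon_scalev; apply: all_mon_flatten_map => j _.
by apply: all_mon_linext; [apply: HQ | apply: IH].
Qed.

Lemma Sop_aux_all_mon Q fuel a p v :
  alpha_stable Q -> all_mon Q v -> all_mon Q (Sop_aux k fuel a p v).
Proof.
move=> HQ Hv; elim: fuel a => [|f IH] [|a] //.
rewrite Sop_auxS all_mon_scalev; apply: all_mon_flatten_map => j _.
by apply: all_mon_linext; [apply: HQ | apply: IH].
Qed.

Lemma exp_mode_mon_lat p n (w : mon) : all_mon (lat_eq (w.2 + p)) (exp_mode_mon F k p n w).
Proof.
rewrite /exp_mode_mon; apply: all_mon_flatten_map => b _; case: ifP => // _.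
apply: Sop_aux_all_mon; first exact: alpha_stable_lat.
have : all_mon (lat_eq w.2) (Top k b p [:: (1 : F, w)]).
  by apply: Top_aux_all_mon; [exact: alpha_stable_lat | rewrite /all_mon /lat_eq /= eqxx].
rewrite /all_mon /shiftlat all_map; apply: sub_all => e /=.
by rewrite /lat_eq /= => /eqP ->.
Qed.

Lemma exp_mode_mon_pos p n (w : mon) :
  pos_modes w -> all_mon pos_modes (exp_mode_mon F k p n w).
Proof.
move=> Hw; rewrite /exp_mode_mon; apply: all_mon_flatten_map => b _; case: ifP => // _.
apply: Sop_aux_all_mon; first exact: alpha_stable_pos.
have : all_mon pos_modes (Top k b p [:: (1 : F, w)]).
  by apply: Top_aux_all_mon; [exact: alpha_stable_pos | rewrite /all_mon /= Hw].
by rewrite /all_mon /shiftlat all_map.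
Qed.

Definition mon_invariant Q : Prop :=
  forall x y : mon, perm_eq x.1 y.1 -> x.2 = y.2 -> Q x = Q y.

Lemma lat_eq_invariant q : mon_invariant (lat_eq q).
Proof. by move=> x y _; rewrite /lat_eq => ->. Qed.

Lemma pos_modes_invariant : mon_invariant pos_modes.
Proof. by move=> x y Hxy _; rewrite /pos_modes (perm_all _ Hxy). Qed.

Lemma coef_eq0_outside Q v b : mon_invariant Q -> all_mon Q v -> ~~ Q b -> coef v b = 0.
Proof.
move=> HQ Hv Hb; rewrite /coef big_seq_cond big1 // => e /andP[He /andP[Hp /eqP Hq]].
by move: Hb; rewrite -(HQ _ _ Hp Hq) (allP Hv e He).
Qed.

Lemma coef_filter Q v b :
  mon_invariant Q -> coef [seq e <- v | Q e.2] b = if Q b then coef v b else 0.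
Proof.
move=> HQ; rewrite /coef big_filter_cond; case: ifP => Hb.
  apply: eq_bigl => e; case Hc: (perm_eq _ _ && _); rewrite ?andbF //.
  by case/andP: Hc => Hp /eqP Hq; rewrite (HQ _ _ Hp Hq) Hb.
rewrite big1 // => e /andP[Qe /andP[Hp /eqP Hq]].
by move: Qe; rewrite (HQ _ _ Hp Hq) Hb.
Qed.

(* alpha(j) kills alpha(-N) e^{q alpha} for 0 < j < N, so these terms of E^+ vanish. *)
Lemma Top_aux_single_mode_lt fuel b N p q (c : F) :
  (0 < b < N)%N -> Top_aux k fuel b p [:: (c, ([:: N], q))] = [::].
Proof.
elim: fuel b => [|f IH] [|b] // Hb; rewrite Top_auxS flatten_map_nil // => j.
rewrite mem_iota => /andP[Hj1 Hj2]; case: (ltngtP j b.+1) => Hj.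
- by rewrite IH //; lia.
- by lia.
- rewrite Hj subnn Top_aux0 /alpha /linext /= (_ : (N == b.+1) = false) //; apply/eqP; lia.
Qed.

Lemma Top_single_mode_diag N p q :
  (N.+1%:R : F) != 0 ->
  Top k N.+1 p [:: (1 : F, ([:: N.+1], q))] = [:: (- (2 * k)%N%:R * p%:~R, ([::], q))].
Proof.
move=> HN; rewrite /Top Top_auxS -addn1 iotaD map_cat flatten_cat flatten_map_nil; last first.
  by move=> j; rewrite mem_iota => /andP[Hj1 Hj2]; rewrite Top_aux_single_mode_lt //; lia.
rewrite /= add1n addn1 subnn Top_aux0 /alpha /linext /= eqxx /=.
congr [:: (_, _)]; rewrite natrM mulrS; field.
by move: HN; rewrite mulrS.
Qed.

(* For 2kpq = N + 2 the -2 mode of e^{p alpha} only meets the top term alpha(N+1) of E^+. *)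
Lemma exp_mode_mon_single_mode p q N :
  (N.+1%:R : F) != 0 -> (2 * k)%:Z * p * q = N.+2%:Z ->
  exp_mode_mon F k p (-2) ([:: N.+1], q) = [:: (- (2 * k)%N%:R * p%:~R, ([::], q + p))].
Proof.
move=> HN Hpq; rewrite /exp_mode_mon (_ : sumn _ = N.+1); last by rewrite /= addn0.
rewrite (_ : iota 0 N.+2 = iota 0 N.+1 ++ [:: N.+1]); last by rewrite -addn1 iotaD.
rewrite map_cat flatten_cat.
rewrite flatten_map_nil; last first.
  move=> b; rewrite mem_iota => /andP[_ Hb] /=.
  by rewrite (_ : (0 <= _ :> int) = false) //; lia.
rewrite /= (_ : (0 <= _ :> int) = true); last by lia.
rewrite (_ : (_ - 1 :> int) = 0); last by lia.
by rewrite /Sop /= Top_single_mode_diag //= cats0.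
Qed.

Definition M1plus_mon (x : mon) : bool :=
  [&& x.2 == 0, ~~ odd (size x.1) & all (fun n => 0 < n)%N x.1].

Lemma M1plus_mon_invariant : mon_invariant M1plus_mon.
Proof. by move=> x y Hxy Hq; rewrite /M1plus_mon Hq (perm_size Hxy) (perm_all _ Hxy). Qed.

(* On M(1) the odd part of v + theta v cancels, so only M(1)^+ monomials survive. *)
Lemma coef_cat_theta_M1plus (v : vec F) b :
  all_mon (lat_eq 0) v -> all_mon pos_modes v ->
  coef (v ++ theta v) b = coef [seq e <- v ++ theta v | M1plus_mon e.2] b.
Proof.
move=> Hlat Hpos; rewrite coef_filter; last exact: M1plus_mon_invariant.
case: b => l p; case HM: (M1plus_mon (l, p)) => //.
rewrite coef_cat coef_theta; have [Hp | Hp] := eqVneq p 0; last first.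
  rewrite !(coef_eq0_outside _ _ _ (lat_eq_invariant 0) Hlat) ?mulr0 ?addr0 //.
    by rewrite /lat_eq /= oppr_eq0.
subst p; rewrite oppr0; case Hl: (pos_modes (l, 0)); last first.
  by rewrite (coef_eq0_outside _ _ _ pos_modes_invariant Hpos) ?Hl // mulr0 addr0.
have Hodd : odd (size l).
  by move: HM Hl; rewrite /M1plus_mon /pos_modes /= ?eqxx; case: odd; case: all.
by rewrite -signr_odd Hodd expr1 mulN1r addrN.
Qed.

Lemma Evec_inVplus (m : int) : inVplus (Evec F m).
Proof.
split => // -[l p]; rewrite coef_theta /Evec !coef_cons !coef_nil /=.
case Hl: (perm_eq [::] l); last by rewrite /= !addr0 mulr0.
have -> : l = [::] by apply/size0nil; rewrite -(perm_size Hl).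
by rewrite /= expr0 mul1r !eqr_oppLR opprK !addr0 addrC.
Qed.

Definition Uvec (N : nat) (m : int) : vec F := [:: (1, ([:: N], m)); (-1, ([:: N], - m))].

Lemma Uvec_inVplus N (m : int) : (0 < N)%N -> inVplus (Uvec N m).
Proof.
move=> HN; split; first by rewrite /wfv /= HN.
move=> [l p]; rewrite coef_theta !coef_cons !coef_nil /=.
case Hl: (perm_eq [:: N] l); last by rewrite /= !addr0 mulr0.
rewrite -(perm_size Hl) /= expr1 !eqr_oppLR opprK.
by case: (m == p); case: (m == - p);
  rewrite /= ?addr0 ?add0r ?mulN1r ?opprK ?oppr0 // opprD opprK addrC.
Qed.

Definition cross_term (N m : nat) : vec F := exp_mode_mon F k m (-2) ([:: N], - m%:Z).

Lemma coef_mode_Evec_Uvec N (m : nat) :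
  (N.+1%:R : F) != 0 -> (2 * k * m * m)%N = N.+2 ->
  forall b, coef (mode k (Evec F m) (-2) (Uvec N.+1 m)) b =
    - (2 * k * m)%N%:R * coef (Evec F (2 * m)%N) b
    - coef (cross_term N.+1 m ++ theta (cross_term N.+1 m)) b.
Proof.
move=> HN Hkm b.
have same_sign : exp_mode_mon F k m (-2) ([:: N.+1], m%:Z) =
                 [:: (- (2 * k * m)%N%:R, ([::], (2 * m)%N%:Z))].
  rewrite exp_mode_mon_single_mode //; last by rewrite -Hkm !PoszM; ring.
  by rewrite -pmulrn mulNr -natrM [(2 * m)%N]mul2n -addnn PoszD.
have opp_sign : exp_mode_mon F k (- m%:Z) (-2) ([:: N.+1], - m%:Z) =
                [:: ((2 * k * m)%N%:R, ([::], - (2 * m)%N%:Z))].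
  rewrite exp_mode_mon_single_mode //; last by rewrite -Hkm !PoszM; ring.
  by rewrite mulrNz -pmulrn mulrN mulNr opprK -natrM [(2 * m)%N]mul2n -addnn PoszD opprD.
have cross_theta : exp_mode_mon F k (- m%:Z) (-2) ([:: N.+1], m%:Z) =
                   scalev (-1) (theta (cross_term N.+1 m)).
  by have := exp_mode_mon_theta m%:Z (-2) [:: N.+1] (- m%:Z); rewrite opprK expr1.
rewrite /mode /Evec /Uvec /= /linext /= same_sign opp_sign cross_theta -/(cross_term _ _).
move: (cross_term _ _) => Z.
rewrite !(cats0, coef_cat, coef_scalev, coef_cons, coef_nil) /=.
by case: (perm_eq [::] b.1 && _); case: (perm_eq [::] b.1 && _); ring.
Qed.

End LatticeVOAComputations.

Theorem lemma4p1 (F : fieldType) (k : nat) :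
  [pchar F] =i pred0 -> (3 <= k)%N ->
  forall m : nat, (0 < m)%N ->
  exists (w c : vec F),
    inM1plus w /\ inC2plus k c /\
    forall b : mon, coef (Evec F (2 * m)%N%:Z) b = coef w b + coef c b.
Proof.
move=> charF0 k_ge3 m m_gt0.
have natrF_eq0 := (pcharf0P _).1 charF0.
set N := (2 * k * m * m - 2)%N.
have kmm_eq : (2 * k * m * m)%N = N.+2 by rewrite /N; nia.
set K : F := (2 * k * m)%N%:R.
set Z := cross_term F k N.+1 m.
have Z_lat : all_mon F (lat_eq 0) Z.
  by have := exp_mode_mon_lat F k m (-2) ([:: N.+1], - m%:Z); rewrite addNr.
have Z_pos : all_mon F pos_modes Z by apply: exp_mode_mon_pos.
exists (scalev (- K^-1) [seq e <- Z ++ theta Z | M1plus_mon e.2]),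
       (scalev (- K^-1) (mode k (Evec F m) (-2) (Uvec F N.+1 m))).
split; [|split].
- by rewrite /inM1plus /scalev all_map; apply/allP => e; rewrite mem_filter => /andP[].
- exists [:: (- K^-1, Evec F m, Uvec F N.+1 m)]; split; last first.
    by move=> b; rewrite coef_scalev big_seq1.
  by move=> t; rewrite inE => /eqP -> /=; split; [exact: Evec_inVplus | exact: Uvec_inVplus].
- move=> b; rewrite !coef_scalev -coef_cat_theta_M1plus // coef_mode_Evec_Uvec ?natrF_eq0 //.
  by field; rewrite !natrF_eq0; apply/and3P; split; lia.
Qed.
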